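(* For every $l\in L$ and $x_0\in\{x,y\}$: $\partial^A_{x_0}(l)=\operatorname{ad}_{\partial^L_{x_0}(l)}(1\otimes1)$.
   Context: $A=\mathbb{R}\langle x,y\rangle$; $L\subset A$ the free Lie algebra on $x,y$. $\partial^A_{x_0}:A\to A\otimes A$ is given on monomials by $a_1\cdots a_n\mapsto\sum_{i:\,a_i=x_0}a_1\cdots a_{i-1}\otimes a_{i+1}\cdots a_n$; write $\partial^A_{x_0}(l)=\sum\partial^1\otimes\partial^2$, and $\partial^L_{x_0}(l)=\sum\partial^1\epsilon(\partial^2)\in A$ where $\epsilon:A\to\mathbb{R}$ is the constant-term algebra homomorphism. $A\otimes A$ is an $A$-bimodule via $a(b\otimes c)d=ab\otimes cd$. For $a\in A$, $\operatorname{ad}_a:A\otimes A\to A\otimes A$ is defined linearly in $a$ by $\operatorname{ad}_1=\mathrm{id}$ and $\operatorname{ad}_{za}(m)=z\,\operatorname{ad}_a(m)-\operatorname{ad}_a(m)\,z$ for $z\in\{x,y\}$ and monomials $a$. *)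

From HB Require Import structures.
From mathcomp Require Import all_boot all_order all_algebra.
From mathcomp Require Import Rstruct.
From Stdlib Require Import Reals.
Set Implicit Arguments. Unset Strict Implicit. Unset Printing Implicit Defensive.
Import GRing.Theory.
Local Open Scope ring_scope.

(* Letters: true = x, false = y.  Words = monomials of A = R<x,y>. *)
Definition word := seq bool.

(* Elements of A are given by their coefficient functions on words. *)
Definition A := word -> R.
(* Elements of A ⊗ A are given by their coefficients on u ⊗ v. *)
Definition AA := word -> word -> R.

Definition letter (b : bool) : A := fun w => if w == [:: b] then 1 else 0.
Definition Ax : A := letter true.
Definition Ay : A := letter false.

Definition addA (f g : A) : A := fun w => f w + g w.
Definition scaleA (c : R) (f : A) : A := fun w => c * f w.
Definition mulA (f g : A) : A :=
  fun w => \sum_(i < (size w).+1) f (take i w) * g (drop i w).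
Definition bracket (f g : A) : A := fun w => mulA f g w - mulA g f w.

Inductive inL : A -> Prop :=
  | inL_x : inL Ax
  | inL_y : inL Ay
  | inL_add f g : inL f -> inL g -> inL (addA f g)
  | inL_scale c f : inL f -> inL (scaleA c f)
  | inL_br f g : inL f -> inL g -> inL (bracket f g).

Definition epsA (f : A) : R := f [::].

Definition dA (x0 : bool) (f : A) : AA := fun u v => f (u ++ x0 :: v).

(* ∂^L_{x0}(l) = Σ ∂^1 ε(∂^2), i.e. (id ⊗ ε) ∂^A_{x0}(l) *)
Definition dL (x0 : bool) (f : A) : A := fun u => epsA (dA x0 f u).

Definition oneone : AA := fun u v => ((u == [::]) && (v == [::]))%:R.

(* left / right multiplication by a letter on A ⊗ A:  z (b⊗c) = zb ⊗ c,  (b⊗c) z = b ⊗ cz *)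
Definition lmulT (z : bool) (m : AA) : AA :=
  fun u v => if u is z' :: u' then (z' == z)%:R * m u' v else 0.
Definition rmulT (z : bool) (m : AA) : AA :=
  fun u v => if rev v is z' :: rv then (z' == z)%:R * m u (rev rv) else 0.

Fixpoint adw (w : word) (m : AA) : AA :=
  match w with
  | [::] => m
  | z :: w' => fun u v => lmulT z (adw w' m) u v - rmulT z (adw w' m) u v
  end.

(* ad_a extended linearly in a.  The coefficient at u ⊗ v of ad_w m vanishes
   when size w > size u + size v (each letter of w lands in u or in v), so the
   linear extension is the finite sum below. *)
Definition adA (a : A) (m : AA) : AA :=
  fun u v => \sum_(k < (size u + size v).+1) \sum_(t : k.-tuple bool)
               a (tval t) * adw (tval t) m u v.

From Pilot Require Import Defs.
From HB Require Import structures.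
From mathcomp Require Import all_boot all_order all_algebra.
From Stdlib Require Import Reals FunctionalExtensionality.
From mathcomp Require Import Rstruct ring.
Import Pilot.Defs.
Set Implicit Arguments. Unset Strict Implicit. Unset Printing Implicit Defensive.
Import GRing.Theory.
Local Open Scope ring_scope.

(* The map a |-> ad_a is multiplicative, ad_(ab) = ad_a o ad_b, and for a letter
   it is the inner derivation ad_z m = z m - m z; since a |-> (m |-> a m - m a)
   turns commutators into commutators, ad_l m = l m - m l for every Lie element l.
   On the other side d^A_x0 is a derivation of A into the bimodule A (x) A, which
   gives d^L_x0 (f g) = f d^L_x0 g + d^L_x0 f eps(g), and eps vanishes on L.
   By induction on l the only nontrivial case is l = [f, g], where
     ad_(f d^L g - g d^L f) (1 (x) 1) = ad_f (d^A g) - ad_g (d^A f)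
                                      = f d^A g - d^A g f - g d^A f + d^A f g
                                      = d^A [f, g].
   Every property of ad is derived from its recursion on coefficients,
   ad_a = a(1) id + sum_z (z ad_(z^-1 a) - ad_(z^-1 a) z). *)

Implicit Types (a b f g h : A) (m M N : AA) (u v w : word) (z : bool).

Lemma big_tuple0 (S : Type) (idx : S) (op : Monoid.law idx) (T : finType)
    (F : 0.-tuple T -> S) :
  \big[op/idx]_(t : 0.-tuple T) F t = F [tuple].
Proof. by rewrite (big_pred1 [tuple]) // => t; apply/esym/eqP/tuple0. Qed.

Lemma big_tuple_cons (S : Type) (idx : S) (op : Monoid.com_law idx) (T : finType)
    n (F : n.+1.-tuple T -> S) :
  \big[op/idx]_(t : n.+1.-tuple T) F t
    = \big[op/idx]_(x : T) \big[op/idx]_(t : n.-tuple T) F [tuple of x :: t].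
Proof.
rewrite pair_big (reindex (fun p : T * n.-tuple T => [tuple of p.1 :: p.2])) //=.
exists (fun t => (thead t, [tuple of behead t])) => [[x t] _ | t _].
  by congr pair; apply: val_inj.
by apply: val_inj; case: t => [[|x s] ?].
Qed.

Lemma sum_delta (S : pzSemiRingType) (I : finType) (i0 : I) (F : I -> S) :
  \sum_i (i0 == i)%:R * F i = F i0.
Proof.
rewrite (bigD1 i0) //= eqxx mul1r big1 ?addr0 // => i ne_i_i0.
by rewrite eq_sym (negbTE ne_i_i0) mul0r.
Qed.

Definition lquo z a : A := fun w => a (z :: w).
Definition rquo z a : A := fun w => a (rcons w z).
Definition oneA : A := fun w => (w == [::])%:R.

Lemma mulA_nil f g : mulA f g [::] = f [::] * g [::].
Proof. by rewrite /mulA big_ord1. Qed.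

Lemma mulA_cons f g z w :
  mulA f g (z :: w) = mulA (lquo z f) g w + f [::] * g (z :: w).
Proof. by rewrite /mulA big_ord_recl addrC. Qed.

Lemma mulA_rcons f g z w :
  mulA f g (rcons w z) = mulA f (rquo z g) w + f (rcons w z) * g [::].
Proof.
elim: w f => [|z' w IH] f; first by rewrite mulA_cons !mulA_nil addrC.
by rewrite rcons_cons !mulA_cons IH addrAC.
Qed.

Lemma mulA_addl f g h w : mulA (addA f g) h w = mulA f h w + mulA g h w.
Proof. by rewrite /mulA -big_split; apply: eq_bigr => i _; rewrite mulrDl. Qed.

Lemma mulA_addr f g h w : mulA f (addA g h) w = mulA f g w + mulA f h w.
Proof. by rewrite /mulA -big_split; apply: eq_bigr => i _; rewrite mulrDr. Qed.

Lemma mulA_subl f g h w :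
  mulA (fun w' => f w' - g w') h w = mulA f h w - mulA g h w.
Proof. by rewrite /mulA -sumrB; apply: eq_bigr => i _; rewrite mulrBl. Qed.

Lemma mulA_subr f g h w :
  mulA f (fun w' => g w' - h w') w = mulA f g w - mulA f h w.
Proof. by rewrite /mulA -sumrB; apply: eq_bigr => i _; rewrite mulrBr. Qed.

Lemma mulA_scalel c f g w : mulA (scaleA c f) g w = c * mulA f g w.
Proof. by rewrite /mulA mulr_sumr; apply: eq_bigr => i _; rewrite mulrA. Qed.

Lemma mulA_scaler c f g w : mulA f (scaleA c g) w = c * mulA f g w.
Proof. by rewrite /mulA mulr_sumr; apply: eq_bigr => i _; rewrite mulrCA. Qed.

Lemma mulA_onel g w : mulA oneA g w = g w.
Proof.
case: w => [|z w]; first by rewrite mulA_nil mul1r.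
by rewrite mulA_cons mul1r /mulA big1 ?add0r // => i _; rewrite mul0r.
Qed.

Lemma mulA_oner f w : mulA f oneA w = f w.
Proof.
elim: w f => [|z w IH] f; first by rewrite mulA_nil mulr1.
by rewrite mulA_cons IH mulr0 addr0.
Qed.

Lemma lquo_mul z f g :
  lquo z (mulA f g) = addA (mulA (lquo z f) g) (scaleA (f [::]) (lquo z g)).
Proof. by apply: functional_extensionality => w; rewrite /lquo mulA_cons. Qed.

Lemma mulA_assoc f g h w : mulA f (mulA g h) w = mulA (mulA f g) h w.
Proof.
elim: w f g => [|z w IH] f g; first by rewrite !mulA_nil mulrA.
rewrite !mulA_cons IH lquo_mul mulA_addl mulA_scalel mulA_nil; ring.
Qed.

Lemma lquo_letter z' z : lquo z' (letter z) = scaleA (z' == z)%:R oneA.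
Proof.
apply: functional_extensionality => w; rewrite /lquo /letter /scaleA /oneA.
by case: w => [|? ?]; case: z z' => [] [] /=; ring.
Qed.

Lemma rquo_letter z' z : rquo z' (letter z) = scaleA (z' == z)%:R oneA.
Proof.
apply: functional_extensionality => w; rewrite /rquo /letter /scaleA /oneA.
by case: w => [|? [|? ?]]; case: z z' => [] []; rewrite /= ?eqseq_cons ?andbF; ring.
Qed.

Definition lact f M : AA := fun u v => mulA f (M^~ v) u.
Definition ract M f : AA := fun u v => mulA (M u) f v.

Lemma lact_mul f g M u v : lact f (lact g M) u v = lact (mulA f g) M u v.
Proof. exact: mulA_assoc. Qed.

Lemma ract_mul M f g u v : ract (ract M f) g u v = ract M (mulA f g) u v.
Proof. by rewrite /ract mulA_assoc. Qed.

Lemma lact_ract f M g u v : lact f (ract M g) u v = ract (lact f M) g u v.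
Proof.
rewrite /lact /ract /mulA; under eq_bigr do rewrite mulr_sumr.
rewrite exchange_big; apply: eq_bigr => j _.
by rewrite mulr_suml; apply: eq_bigr => i _; rewrite mulrA.
Qed.

Lemma lact_subl f g M u v :
  lact (fun w => f w - g w) M u v = lact f M u v - lact g M u v.
Proof. exact: mulA_subl. Qed.

Lemma lact_subr f M N u v :
  lact f (fun u' v' => M u' v' - N u' v') u v = lact f M u v - lact f N u v.
Proof. exact: mulA_subr. Qed.

Lemma ract_subl M N f u v :
  ract (fun u' v' => M u' v' - N u' v') f u v = ract M f u v - ract N f u v.
Proof. exact: mulA_subl. Qed.

Lemma ract_subr M f g u v :
  ract M (fun w => f w - g w) u v = ract M f u v - ract M g u v.
Proof. exact: mulA_subr. Qed.

Lemma lmulT_lact z M u v : lmulT z M u v = lact (letter z) M u v.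
Proof.
rewrite /lact; case: u => [|z' u]; first by rewrite mulA_nil /letter mul0r.
by rewrite mulA_cons lquo_letter mulA_scalel mulA_onel /letter mul0r addr0.
Qed.

Lemma rmulT_ract z M u v : rmulT z M u v = ract M (letter z) u v.
Proof.
rewrite /rmulT /ract; case/lastP: v => [|v z']; first by rewrite mulA_nil /letter mulr0.
rewrite rev_rcons revK mulA_rcons rquo_letter mulA_scaler mulA_oner.
by rewrite /letter mulr0 addr0.
Qed.

Lemma adA_recE a m u v :
  adA a m u v = a [::] * m u v
    + (if u is z :: u' then adA (lquo z a) m u' v else 0)
    - (if rev v is z :: v' then adA (lquo z a) m u (rev v') else 0).
Proof.
rewrite /adA big_ord_recl big_tuple0 /=.
under eq_bigr => i _ do rewrite big_tuple_cons /=.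
under eq_bigr do under eq_bigr do under eq_bigr do rewrite mulrBr.
under eq_bigr do under eq_bigr do rewrite sumrB.
under eq_bigr do rewrite sumrB.
rewrite sumrB -addrA; congr (_ + (_ - _)).
- case: u => [|z0 u] /=.
    by rewrite big1 // => i _; rewrite big1 // => z _; rewrite big1 // => t _; rewrite mulr0.
  under eq_bigr do under eq_bigr do under eq_bigr do rewrite /lmulT mulrCA.
  under eq_bigr do under eq_bigr do rewrite -mulr_sumr.
  by under eq_bigr do rewrite sum_delta.
- case/lastP: v => [|v z0] /=.
    by rewrite big1 // => i _; rewrite big1 // => z _; rewrite big1 // => t _; rewrite mulr0.
  under eq_bigr do under eq_bigr do under eq_bigr do
    rewrite /rmulT rev_rcons revK mulrCA.
  under eq_bigr do under eq_bigr do rewrite -mulr_sumr.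
  under eq_bigr do rewrite sum_delta.
  by rewrite rev_rcons revK size_rcons addnS.
Qed.

Lemma adA_add f g m u v : adA (addA f g) m u v = adA f m u v + adA g m u v.
Proof.
rewrite /adA -big_split; apply: eq_bigr => k _.
by rewrite -big_split; apply: eq_bigr => t _; rewrite mulrDl.
Qed.

Lemma adA_sub f g m u v :
  adA (fun w => f w - g w) m u v = adA f m u v - adA g m u v.
Proof.
rewrite /adA -sumrB; apply: eq_bigr => k _.
by rewrite -sumrB; apply: eq_bigr => t _; rewrite mulrBl.
Qed.

Lemma adA_scale c f m u v : adA (scaleA c f) m u v = c * adA f m u v.
Proof.
rewrite /adA mulr_sumr; apply: eq_bigr => k _.
by rewrite mulr_sumr; apply: eq_bigr => t _; rewrite mulrA.
Qed.

Lemma adA0 m u v : adA (fun _ => 0) m u v = 0.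
Proof. by rewrite /adA big1 // => k _; rewrite big1 // => t _; rewrite mul0r. Qed.

Lemma adA_one m u v : adA oneA m u v = m u v.
Proof.
have lquo_one z : lquo z oneA = fun _ => 0 by [].
rewrite adA_recE; case: u => [|z u]; case: (rev v) => [|z' v'];
  rewrite /= ?lquo_one ?adA0 /oneA /=; ring.
Qed.

Lemma adA_letter z m u v : adA (letter z) m u v = lmulT z m u v - rmulT z m u v.
Proof.
rewrite adA_recE /lmulT /rmulT; case: u => [|z' u]; case: (rev v) => [|z'' v'];
  rewrite /= ?lquo_letter ?adA_scale ?adA_one /letter /=; ring.
Qed.

Lemma adA_mul a b m u v : adA (mulA a b) m u v = adA a (adA b m) u v.
Proof.
elim: u v a => [|z u IHu] v; elim/last_ind: v => [|v z' IHv] a;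
  rewrite [LHS]adA_recE [RHS]adA_recE [adA b m _ _]adA_recE mulA_nil
    ?rev_rcons ?revK /= ?lquo_mul ?adA_add ?adA_scale ?IHu ?IHv; ring.
Qed.

Lemma adA_inL l : inL l -> forall m, adA l m = fun u v => lact l m u v - ract m l u v.
Proof.
elim=> [| | f g _ IHf _ IHg | c f _ IHf | f g _ IHf _ IHg] m;
  apply: functional_extensionality => u; apply: functional_extensionality => v.
- by rewrite adA_letter lmulT_lact rmulT_ract.
- by rewrite adA_letter lmulT_lact rmulT_ract.
- rewrite adA_add IHf IHg /lact /ract mulA_addl mulA_addr; ring.
- rewrite adA_scale IHf /lact /ract mulA_scalel mulA_scaler; ring.
- rewrite /bracket adA_sub !adA_mul !IHf !IHg /=.
  rewrite !lact_subr !ract_subl !lact_subl !ract_subr !lact_mul !ract_mul !lact_ract.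
  ring.
Qed.

Lemma epsA_inL l : inL l -> epsA l = 0.
Proof.
rewrite /epsA; elim=> [| | f g _ Hf _ Hg | c f _ Hf | f g _ Hf _ Hg] //.
- by rewrite /addA Hf Hg addr0.
- by rewrite /scaleA Hf mulr0.
- by rewrite /bracket !mulA_nil Hf Hg mul0r subrr.
Qed.

Lemma dA_mul x0 f g u v :
  dA x0 (mulA f g) u v = lact f (dA x0 g) u v + ract (dA x0 f) g u v.
Proof.
elim: u f => [|z u IH] f; rewrite /dA /lact /ract /= mulA_cons.
  by rewrite mulA_nil addrC.
have := IH (lquo z f); rewrite /dA /lact /ract /= => ->.
by rewrite mulA_cons addrAC.
Qed.

Lemma dA_bracket x0 f g u v :
  dA x0 (bracket f g) u v = lact f (dA x0 g) u v + ract (dA x0 f) g u v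
                            - (lact g (dA x0 f) u v + ract (dA x0 g) f u v).
Proof. by rewrite -!dA_mul. Qed.

Lemma dA_letter x0 z u v : dA x0 (letter z) u v = (x0 == z)%:R * oneone u v.
Proof.
rewrite /dA /letter /oneone; case: u => [|? [|? ?]]; case: v => [|? ?];
  case: z x0 => [] []; rewrite /= ?eqseq_cons ?andbF; ring.
Qed.

Lemma dL_rquo x0 f : dL x0 f = rquo x0 f.
Proof. by apply: functional_extensionality => w; rewrite /dL /epsA /dA /rquo cats1. Qed.

Lemma dL_mul x0 f g w : dL x0 (mulA f g) w = mulA f (dL x0 g) w + dL x0 f w * epsA g.
Proof. rewrite !dL_rquo; exact: mulA_rcons. Qed.

Lemma dL_bracket x0 f g : inL f -> inL g ->
  dL x0 (bracket f g) = fun w => mulA f (dL x0 g) w - mulA g (dL x0 f) w.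
Proof.
move=> Lf Lg; apply: functional_extensionality => w.
rewrite [LHS]/(dL x0 (mulA f g) w - dL x0 (mulA g f) w) !dL_mul !epsA_inL //.
by rewrite !mulr0 !addr0.
Qed.

Theorem mainTheorem14 (x0 : bool) (l : A) :
  inL l -> dA x0 l = adA (dL x0 l) oneone.
Proof.
elim=> [| | f g _ IHf _ IHg | c f _ IHf | f g Lf IHf Lg IHg];
  apply: functional_extensionality => u; apply: functional_extensionality => v.
- by rewrite dL_rquo rquo_letter adA_scale adA_one dA_letter.
- by rewrite dL_rquo rquo_letter adA_scale adA_one dA_letter.
- by rewrite [dL _ _]/(addA (dL x0 f) (dL x0 g)) adA_add -IHf -IHg.
- by rewrite [dL _ _]/(scaleA c (dL x0 f)) adA_scale -IHf.
- rewrite dA_bracket dL_bracket // adA_sub !adA_mul -IHf -IHg.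
  by rewrite (adA_inL Lf) (adA_inL Lg) /=; ring.
Qed.
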